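(* Let $n\ge1$, $q$ a prime power, and let $\mathcal{F}$ be a covering of $[n]$ with no redundant basic set. The $\mathcal{F}$-combinatorial metric $d_{\mathcal{F}}$ on $\mathbb{F}_q^n$ admits a MacWilliams-type identity if and only if $\mathcal{F}$ is a $k$-partition of $[n]$ for some $k$.
   Context: For a covering $\mathcal{F}$ of $[n]$ (a family of subsets, called basic sets, whose union is $[n]$) and $x\in\mathbb{F}_q^n$ with $\mathrm{supp}(x)=\{i:x_i\neq0\}$, $\mathrm{wt}_{\mathcal{F}}(x)=\min\{|\mathcal{A}|:\mathcal{A}\subset\mathcal{F},\ \mathrm{supp}(x)\subset\bigcup_{A\in\mathcal{A}}A\}$ and $d_{\mathcal{F}}(x,y)=\mathrm{wt}_{\mathcal{F}}(x-y)$. A basic set $A$ is redundant if $A\subsetneq B$ for some $B\in\mathcal{F}$. $\mathcal{F}$ is a $k$-partition if it is a partition of $[n]$ all of whose blocks have cardinality $k$. For a linear code $\mathcal{C}\subset\mathbb{F}_q^n$, $\mathcal{C}^\perp=\{u: \sum_i u_ic_i=0\ \forall c\in\mathcal{C}\}$ and $W_{\mathcal{C}}(x,y)=\sum_{c\in\mathcal{C}}x^{D-\mathrm{wt}_{\mathcal{F}}(c)}y^{\mathrm{wt}_{\mathcal{F}}(c)}$ with $D=\max_{c\in\mathcal{C}}\mathrm{wt}_{\mathcal{F}}(c)$. The metric $d_{\mathcal{F}}$ admits a MacWilliams-type identity if for all linear codes $\mathcal{C}_1,\mathcal{C}_2\subset\mathbb{F}_q^n$, $W_{\mathcal{C}_1}=W_{\mathcal{C}_2}$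 implies $W_{\mathcal{C}_1^\perp}=W_{\mathcal{C}_2^\perp}$. *)

From HB Require Import structures.
From mathcomp Require Import all_boot all_order all_algebra all_field.

Set Implicit Arguments. Unset Strict Implicit. Unset Printing Implicit Defensive.
Import GRing.Theory.
Local Open Scope ring_scope.

Section CombMetric.
Variables (K : finFieldType) (n : nat).

Definition supp (x : 'rV[K]_n) : {set 'I_n} := [set i | x 0 i != 0].

Definition covering (F : {set {set 'I_n}}) : Prop := cover F = [set: 'I_n].

Definition redundant (F : {set {set 'I_n}}) (A : {set 'I_n}) : Prop :=
  A \in F /\ exists2 B, B \in F & A \proper B.

(* F-weight: the least number of basic sets covering supp x
   (for a covering F, F itself covers, so the minimum is over a nonempty
    family; #|F| is only the neutral starting value of minn) *)
Definition wtF (F : {set {set 'I_n}}) (x : 'rV[K]_n) : nat :=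
  \big[minn/#|F|]_(A : {set {set 'I_n}} | (A \subset F) && (supp x \subset cover A))
     #|A|.

Definition dF (F : {set {set 'I_n}}) (x y : 'rV[K]_n) : nat := wtF F (x - y).

Definition k_partition (F : {set {set 'I_n}}) (k : nat) : Prop :=
  partition F [set: 'I_n] /\ forall A, A \in F -> #|A| = k.

Definition dual_code (C : {vspace 'rV[K]_n}) : {set 'rV[K]_n} :=
  [set u : 'rV[K]_n | [forall c : 'rV[K]_n, (c \in C) ==> (\sum_(i < n) u 0 i * c 0 i == 0)]].

(* weight enumerator W_S(x,y) = sum_{c in S} x^(D - wt c) y^(wt c),
   D = max weight; as a bivariate polynomial in {poly {poly int}}:
   inner variable = x, outer variable = y *)
Definition maxwt (F : {set {set 'I_n}}) (S : {set 'rV[K]_n}) : nat :=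
  \max_(c in S) wtF F c.

Definition wenum (F : {set {set 'I_n}}) (S : {set 'rV[K]_n}) : {poly {poly int}} :=
  \sum_(c in S) (('X ^+ (maxwt F S - wtF F c) : {poly int})%:P * 'X ^+ (wtF F c)).

Definition code_set (C : {vspace 'rV[K]_n}) : {set 'rV[K]_n} := [set c | c \in C].

Definition admits_MacWilliams (F : {set {set 'I_n}}) : Prop :=
  forall C1 C2 : {vspace 'rV[K]_n},
    wenum F (code_set C1) = wenum F (code_set C2) ->
    wenum F (dual_code C1) = wenum F (dual_code C2).

End CombMetric.

From HB Require Import structures.
From mathcomp Require Import all_boot all_order all_algebra all_field.
From mathcomp Require Import mxabelem.

(* Sufficiency: if F is a partition into k-sets and T is a set of m blocks, the duality
   #|D^perp| * #|D| = q^n applied to D = C + (vectors vanishing on cover T) shows that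
   q^(mk) * #{c in C vanishing on cover T} = #|C| * #{u in C^perp supported on cover T}.
   Summing over all T expresses the binomial moments of the weight distribution of C^perp
   through the weight distribution of C, and these moments determine the distribution.
   Necessity: lines spanned by vectors of equal weight have equal weight enumerators, so a
   MacWilliams identity makes the number of weight-one vectors orthogonal to a weight-one
   vector x independent of x.  Comparing x = e_i with x = e_i + e_j, where j lies in two
   basic sets and i in only one of them, rules out overlapping basic sets; comparing e_i and
   e_j taken in blocks of different sizes rules out blocks of different sizes. *)

Set Implicit Arguments.
Unset Strict Implicit.
Unset Printing Implicit Defensive.

Import Order.TTheory GRing.Theory Num.Theory.
Local Open Scope ring_scope.

Section Weight.
Variables (K : finFieldType) (n : nat).
Implicit Types (F A : {set {set 'I_n}}) (x : 'rV[K]_n).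

Lemma supp0 : supp (0 : 'rV[K]_n) = set0.
Proof. by apply/setP => i; rewrite !inE mxE eqxx. Qed.

Lemma notin_supp x i : (i \notin supp x) = (x 0 i == 0).
Proof. by rewrite inE negbK. Qed.

Lemma supp_eq0 x : (supp x == set0) = (x == 0).
Proof.
apply/eqP/eqP => [x_0|->]; last exact: supp0.
by apply/rowP => i; apply/eqP; rewrite mxE -notin_supp x_0 inE.
Qed.

Lemma mem_supp_neq0 x i : i \in supp x -> x != 0.
Proof. by rewrite inE; apply: contraNneq => ->; rewrite mxE. Qed.

Lemma suppZ (a : K) x : a != 0 -> supp (a *: x) = supp x.
Proof. by move=> a_nz; apply/setP => i; rewrite !inE mxE mulf_eq0 negb_or a_nz. Qed.

Lemma supp_delta (i : 'I_n) : supp ('e_i : 'rV[K]_n) = [set i].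
Proof.
by apply/setP => l; rewrite !inE mxE eqxx andTb; case: (l =P i); rewrite ?oner_eq0 ?eqxx.
Qed.

Lemma supp_delta_add (i j : 'I_n) : i != j ->
  supp ('e_i + 'e_j : 'rV[K]_n) = [set i; j].
Proof.
move=> ij; apply/setP => l; rewrite !inE !mxE eqxx.
have [->|_] := eqVneq l i; first by rewrite (negbTE ij) addr0 oner_eq0.
by case: (l == j); rewrite ?add0r ?oner_eq0 ?eqxx.
Qed.

Lemma wtF_min F x A : A \subset F -> supp x \subset cover A -> (wtF F x <= #|A|)%N.
Proof. by move=> AF xA; rewrite /wtF -minEnat -leEnat; apply: bigmin_le_cond; rewrite AF. Qed.

Lemma wtF_witness F x : covering F ->
  exists2 A : {set {set 'I_n}}, (A \subset F) && (supp x \subset cover A) & wtF F x = #|A|.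
Proof.
move=> covF; rewrite /wtF -minEnat.
have FF : (F \subset F) && (supp x \subset cover F) by rewrite subxx covF subsetT.
have leF (A : {set {set 'I_n}}) : (A \subset F) && (supp x \subset cover A) -> (#|A| <= #|F|)%O.
  by case/andP=> /subset_leq_card; rewrite leEnat.
by have [A ? ->] := eq_bigmin F _ _ FF leF; exists A.
Qed.

Lemma wtF_scale F (a : K) x : a != 0 -> wtF F (a *: x) = wtF F x.
Proof. by move=> a_nz; rewrite /wtF suppZ. Qed.

Section Covering.
Variable F : {set {set 'I_n}}.
Hypothesis covF : covering F.

Lemma wtF_eq0 x : (wtF F x == 0%N) = (x == 0).
Proof.
rewrite -supp_eq0; apply/idP/idP => [wt0|/eqP x0].
  have [A /andP[_ xA] wtA] := wtF_witness x covF.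
  by move: wt0 xA; rewrite wtA cards_eq0 => /eqP ->; rewrite /cover big_set0 subset0.
by rewrite -leqn0 -(cards0 {set 'I_n}) wtF_min ?x0 ?sub0set.
Qed.

Lemma wtF_eq1 x :
  (wtF F x == 1%N) = (supp x != set0) && [exists B in F, supp x \subset B].
Proof.
rewrite supp_eq0 -wtF_eq0; have [A /andP[AF xA] wtA] := wtF_witness x covF.
apply/idP/andP => [wt1|[wt_nz /exists_inP[B BF xB]]].
  split; first by rewrite (eqP wt1).
  move: wt1; rewrite wtA => /cards1P[B A_B]; apply/exists_inP; exists B.
    by rewrite -sub1set -A_B.
  by rewrite A_B cover1 in xA.
by rewrite eqn_leq lt0n wt_nz andbT -(cards1 B) wtF_min ?sub1set ?cover1.
Qed.

End Covering.
End Weight.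

Section Distribution.
Variables (K : finFieldType) (n : nat) (F : {set {set 'I_n}}).
Implicit Types (X Y : {set 'rV[K]_n}).

Definition wt_count X w := #|[set c in X | wtF F c == w]|.

Lemma wtF_le_card (x : 'rV[K]_n) : (wtF F x <= #|F|)%N.
Proof.
rewrite /wtF; elim/big_rec: _ => // A w _; exact: leq_trans (geq_minr _ _).
Qed.

Lemma sum_by_wt (V : nmodType) X (g : nat -> V) :
  \sum_(c in X) g (wtF F c) = \sum_(w < #|F|.+1) g w *+ wt_count X w.
Proof.
pose wt c := Ordinal (wtF_le_card c : (wtF F c < #|F|.+1)%N).
rewrite (partition_big wt predT) //; apply: eq_bigr => w _.
rewrite -sumr_const; apply: eq_big => [c|c /andP[_ /eqP <-] //].
by rewrite inE -val_eqE.
Qed.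

Lemma eq_sum_by_wt (V : nmodType) X Y (g : nat -> V) :
  wt_count X =1 wt_count Y -> \sum_(c in X) g (wtF F c) = \sum_(c in Y) g (wtF F c).
Proof. by move=> XY; rewrite !sum_by_wt; apply: eq_bigr => w _; rewrite XY. Qed.

Lemma coef_wenum X w : ((wenum F X)`_w).[1] = (wt_count X w)%:R :> int.
Proof.
rewrite /wenum coef_sum horner_sum -sumr_const.
rewrite (eq_bigr (fun c => if wtF F c == w then 1 else 0)) -?big_mkcondr; last first.
  move=> c _; rewrite coefMXn coefC subn_eq0.
  by case: (ltngtP w (wtF F c)); rewrite ?horner0 ?hornerXn ?expr1n.
by apply: eq_bigl => c; rewrite inE.
Qed.

Lemma wenum_wt_count X Y : wenum F X = wenum F Y -> wt_count X =1 wt_count Y.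
Proof. by move=> XY w; apply/eqP; rewrite -(eqr_nat int) -!coef_wenum XY. Qed.

Lemma leq_maxwt X Y : wt_count X =1 wt_count Y -> (maxwt F X <= maxwt F Y)%N.
Proof.
move=> XY; apply/bigmax_leqP => c cX.
have : (0 < wt_count Y (wtF F c))%N.
  by rewrite -XY card_gt0; apply/set0Pn; exists c; rewrite inE cX /=.
by rewrite card_gt0 => /set0Pn[d]; rewrite inE => /andP[dY /eqP <-]; apply: leq_bigmax_cond.
Qed.

Lemma eq_wenum X Y : wt_count X =1 wt_count Y -> wenum F X = wenum F Y.
Proof.
move=> XY; have max_XY : maxwt F X = maxwt F Y by apply/eqP; rewrite eqn_leq !leq_maxwt.
rewrite /wenum max_XY.
exact: (eq_sum_by_wt (fun w => ('X ^+ (maxwt F Y - w) : {poly int})%:P * 'X ^+ w)).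
Qed.

Lemma wt_count_sum X w : wt_count X w = (\sum_(c in X) (wtF F c == w))%N.
Proof.
rewrite /wt_count -sum1_card [LHS]big_mkcond [RHS]big_mkcond /=.
by apply: eq_bigr => c _; rewrite inE; case: (c \in X).
Qed.

Lemma wt_count_moments X Y (g : nat -> nat -> nat) :
    (forall m, g m m = 1%N) -> (forall w m, (m < w)%N -> g w m = 0%N) ->
    (forall m, \sum_(c in X) g (wtF F c) m = \sum_(c in Y) g (wtF F c) m)%N ->
  wt_count X =1 wt_count Y.
Proof.
move=> g_diag g_upper XY; elim/ltn_ind => w IH.
pose h v := if (v < w)%N then g v w else 0%N.
have moment (Z : {set 'rV[K]_n}) :
    (\sum_(c in Z) g (wtF F c) w = \sum_(c in Z) h (wtF F c) + wt_count Z w)%N.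
  rewrite wt_count_sum -big_split; apply: eq_bigr => c _; rewrite /h.
  by case: ltngtP => [|/g_upper ->|->]; rewrite ?g_diag /= ?addn0.
have sumXY :
    \sum_(v < #|F|.+1) h v *+ wt_count X v = \sum_(v < #|F|.+1) h v *+ wt_count Y v.
  by apply: eq_bigr => v _; rewrite /h; case: ltnP => [/IH ->|]; rewrite ?mul0rn.
by have /eqP := XY w; rewrite !moment !(sum_by_wt _ h) sumXY eqn_add2l => /eqP.
Qed.

End Distribution.

Section Duality.
Variables (K : finFieldType) (n : nat).
Implicit Types (x u c : 'rV[K]_n) (C U V : {vspace 'rV[K]_n}) (S T : {set 'I_n}).

Definition dot u c : K := \sum_(i < n) u 0 i * c 0 i.

Lemma dotE u c : dot u c = (u *m c^T) 0 0.
Proof. by rewrite mxE; apply: eq_bigr => i _; rewrite mxE. Qed.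

Lemma dual_codeP u C : reflect {in C, forall c, dot u c = 0} (u \in dual_code C).
Proof. by rewrite inE; apply: (iffP forall_inP) => uC c /uC/eqP. Qed.

Definition basis_mx C : 'M[K]_(\dim C, n) := \matrix_(l < \dim C) (vbasis C)`_l.

Lemma mem_basis_mx C c : (c \in C) = (c <= basis_mx C)%MS.
Proof.
apply/idP/idP => [cC|/submxP[w ->]].
  apply/submxP; exists (\row_l coord (vbasis C) l c).
  rewrite mulmx_sum_row {1}(coord_vbasis cC); apply: eq_bigr => l _.
  by rewrite rowK mxE.
rewrite mulmx_sum_row; apply: memv_suml => l _; apply: memvZ; rewrite rowK.
by apply: vbasis_mem; rewrite mem_nth ?size_tuple.
Qed.

Lemma dual_code_rowg C : dual_code C = rowg (kermx (basis_mx C)^T).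
Proof.
apply/setP => u; rewrite mem_rowg sub_kermx; apply/dual_codeP/eqP => [uC|uB c].
  apply/rowP => l; rewrite [RHS]mxE -(uC (row l (basis_mx C))).
    by rewrite mxE; apply: eq_bigr => i _; rewrite !mxE.
  by rewrite mem_basis_mx row_sub.
by rewrite mem_basis_mx => /submxP[w ->]; rewrite dotE trmx_mul mulmxA uB mul0mx mxE.
Qed.

Lemma card_dual_code C : (#|dual_code C| * #|C| = #|K| ^ n)%N.
Proof.
have -> : #|C| = #|rowg (basis_mx C)|.
  by apply: eq_card => c; rewrite mem_rowg -mem_basis_mx.
by rewrite dual_code_rowg !card_rowg mxrank_ker mxrank_tr -expnD subnK ?rank_leq_col.
Qed.

Lemma dotDr u c1 c2 : dot u (c1 + c2) = dot u c1 + dot u c2.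
Proof. by rewrite !dotE linearD mulmxDr mxE. Qed.

Lemma dotZr u (a : K) c : dot u (a *: c) = a * dot u c.
Proof. by rewrite !dotE linearZ /= -scalemxAr mxE. Qed.

Lemma dot_delta u j : dot u 'e_j = u 0 j.
Proof.
rewrite /dot (bigD1 j) //= big1 ?addr0 => [|i /negbTE ij]; rewrite mxE ?ij ?mulr0 //.
by rewrite !eqxx mulr1.
Qed.

Lemma dual_code_addv U V : dual_code (U + V) = dual_code U :&: dual_code V.
Proof.
apply/setP => u; rewrite in_setI.
apply/dual_codeP/andP => [uUV|[/dual_codeP uU /dual_codeP uV] c].
  split; apply/dual_codeP => c cX; apply: uUV; first exact: (subvP (addvSl U V)).
  exact: (subvP (addvSr U V)).
by case/memv_addP=> [a aU [b bV ->]]; rewrite dotDr uU ?uV ?addr0.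
Qed.

Definition supported T : {vspace 'rV[K]_n} :=
  lker (linfun (mulmxr (diag_mx (\row_j ((j \notin T)%:R : K))))).

Lemma mem_supported u T : (u \in supported T) = (supp u \subset T).
Proof.
rewrite memv_ker lfunE /=; apply/eqP/subsetP => [uT j|uT].
  rewrite inE; apply: contraR => jT; move/rowP/(_ j): uT.
  by rewrite mul_mx_diag !mxE jT mulr1 => ->.
apply/rowP => j; rewrite mul_mx_diag !mxE.
case: (boolP (j \in T)) => [_|/(contra (uT j))]; first by rewrite mulr0.
by rewrite notin_supp => /eqP->; rewrite mul0r.
Qed.

Lemma card_supp T : #|[set u : 'rV[K]_n | supp u \subset T]| = (#|K| ^ #|T|)%N.
Proof.
pose g u : {ffun 'I_n -> K} := [ffun j => u 0 j].
have g_inj : injective g by move=> u v /ffunP uv; apply/rowP => j; have := uv j; rewrite !ffunE.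
rewrite -(card_imset _ g_inj) -(card_pffun_on 0 T predT); apply: eq_card => f.
apply/imsetP/pffun_onP => [[u + ->]|[fT _]].
  rewrite inE => uT; split=> //; apply/subsetP => j; rewrite !inE ffunE => uj.
  by apply: (subsetP uT); rewrite inE.
exists (\row_j f j); last by apply/ffunP => j; rewrite !ffunE mxE.
by rewrite inE; apply/subsetP => j; rewrite inE mxE => fj; apply: (subsetP fT); rewrite inE.
Qed.

Lemma dim_supported T : \dim (supported T) = #|T|.
Proof.
apply/eqP; rewrite -(eqn_exp2l _ _ (finNzRing_gt1 K)) -card_vspace -card_supp.
by apply/eqP/eq_card => u; rewrite inE mem_supported.
Qed.

Lemma dual_code_supported T : dual_code (supported T) = [set u | supp u \subset ~: T].
Proof.
apply/setP => u; rewrite [in RHS]inE; apply/dual_codeP/subsetP => [uT j|uT c].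
  rewrite inE !inE; apply: contra => jT; rewrite -dot_delta uT // mem_supported.
  by rewrite supp_delta sub1set.
rewrite mem_supported => cT; apply: big1 => j _.
have [/uT|] := boolP (j \in supp u); last by rewrite notin_supp => /eqP->; rewrite mul0r.
by rewrite inE => /(contra (subsetP cT j)); rewrite notin_supp => /eqP->; rewrite mulr0.
Qed.

Lemma card_dual_code_supp C S :
  (#|dual_code C :&: [set u | supp u \subset S]| * #|C|
    = #|K| ^ #|S| * #|(C :&: supported (~: S))%VS|)%N.
Proof.
(* The left-hand set is the dual of [C + supported (~: S)], whose dimension is given
   by [dimv_sum_cap]. *)
have := card_dual_code (C + supported (~: S)).
rewrite dual_code_addv dual_code_supported setCK !card_vspace.
set a := #|_ :&: _|; set q := #|K| => dual_card.
have q_gt0 : (0 < q ^ #|~: S|)%N by rewrite expn_gt0 (ltnW (finNzRing_gt1 K)).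
apply/eqP; rewrite -(eqn_pmul2r q_gt0) -mulnA -expnD -(dim_supported (~: S)) -dimv_sum_cap.
by rewrite expnD mulnA dual_card mulnAC -!expnD dim_supported cardsC card_ord.
Qed.

End Duality.

Lemma expnS_subn_inj q a b : (1 < q)%N -> (q ^ a.+1 - q ^ a = q ^ b.+1 - q ^ b)%N -> a = b.
Proof.
move=> q_gt1; rewrite !expnS -{2}(mul1n (q ^ a)%N) -{2}(mul1n (q ^ b)%N) -!mulnBl.
by move/eqP; rewrite eqn_pmul2l ?subn_gt0 // eqn_exp2l // => /eqP.
Qed.

Section Counting.
Variable I : finType.
Implicit Types P W T : {set I}.

Lemma double_count (J : finType) (P : pred I) (Q : pred J) (R : I -> J -> bool) :
  (\sum_(i | P i) #|[set j | Q j && R i j]| = \sum_(j | Q j) #|[set i | P i && R i j]|)%N.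
Proof.
transitivity (\sum_(i | P i) \sum_(j | Q j && R i j) 1)%N.
  by apply: eq_bigr => i _; rewrite -sum1_card; apply: eq_bigl => j; rewrite inE.
rewrite (exchange_big_dep Q) => [|i j _ /andP[] //]; apply: eq_bigr => j Qj.
by rewrite -sum1_card; apply: eq_bigl => i; rewrite inE Qj.
Qed.

(* The guard matters: for [m < w], [m - w] truncates to 0 and ['C(_, 0) = 1]. *)
Definition nsupsets (N w m : nat) : nat := if (w <= m)%N then 'C(N - w, m - w) else 0%N.

Lemma nsupsets_diag N m : nsupsets N m m = 1%N.
Proof. by rewrite /nsupsets leqnn subnn bin0. Qed.

Lemma nsupsets_small N w m : (m < w)%N -> nsupsets N w m = 0%N.
Proof. by rewrite /nsupsets ltnNge => /negbTE ->. Qed.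

Lemma card_supsets P W m : W \subset P ->
  #|[set T : {set I} | [&& T \subset P, #|T| == m & W \subset T]]| = nsupsets #|P| #|W| m.
Proof.
move=> WP; rewrite /nsupsets; case: leqP => [Wm|mW]; last first.
  apply: eq_card0 => T; rewrite inE; apply/and3P => -[_ /eqP Tm /subset_leq_card].
  by rewrite Tm leqNgt mW.
rewrite -(cardsDS WP) -cards_draws.
have -> : [set T : {set I} | [&& T \subset P, #|T| == m & W \subset T]]
    = (fun T => T :|: W) @: [set T : {set I} | T \subset P :\: W & #|T| == m - #|W|]%N.
  apply/setP => T; rewrite inE; apply/idP/imsetP => [/and3P[TP /eqP <- WT]|[T']].
    exists (T :\: W); last by rewrite setUC -{1}(setID T W) (setIidPr WT).
    by rewrite inE setSD //= cardsDS // eqxx.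
  rewrite inE subsetD => /andP[/andP[T'P T'W] /eqP T'm] ->.
  rewrite subUset T'P WP subsetUr cardsU (disjoint_setI0 T'W) cards0 subn0 T'm.
  by rewrite subnK // eqxx.
apply: card_in_imset => T1 T2; rewrite !inE !subsetD.
move=> /andP[/andP[_ T1W] _] /andP[/andP[_ T2W] _].
by move/(congr1 (fun T => T :\: W)); rewrite !setDUl setDv !setU0 (setDidPl T1W) (setDidPl T2W).
Qed.

End Counting.

Section Partition.
Variables (K : finFieldType) (n : nat) (F : {set {set 'I_n}}).
Hypothesis partF : partition F [set: 'I_n].
Implicit Types (T : {set {set 'I_n}}) (x : 'rV[K]_n).

Let trivF : trivIset F. Proof. by case/and3P: partF. Qed.
Let coverF : cover F = [set: 'I_n]. Proof. exact: cover_partition partF. Qed.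

Lemma pblock_in_sub T i : T \subset F -> (pblock F i \in T) = (i \in cover T).
Proof.
move=> TF; apply/idP/bigcupP => [iT|[B BT iB]].
  by exists (pblock F i); rewrite // mem_pblock coverF inE.
by rewrite (def_pblock trivF (subsetP TF B BT) iB).
Qed.

Definition blocks x : {set {set 'I_n}} := pblock F @: supp x.

Lemma blocks_subset x T : T \subset F -> (blocks x \subset T) = (supp x \subset cover T).
Proof.
move=> TF; apply/subsetP/subsetP => [xT i xi|xT _ /imsetP[i xi ->]].
  by rewrite -(pblock_in_sub _ TF) xT ?imset_f.
by rewrite pblock_in_sub ?xT.
Qed.

Lemma blocks_subF x : blocks x \subset F.
Proof. by rewrite blocks_subset // coverF subsetT. Qed.

Lemma wtF_partition x : wtF F x = #|blocks x|.
Proof.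
apply/eqP; rewrite eqn_leq wtF_min ?blocks_subF -?blocks_subset ?blocks_subF //=.
have [T /andP[TF xT] ->] := wtF_witness x coverF.
by rewrite subset_leq_card // blocks_subset.
Qed.

Lemma coverC T : T \subset F -> ~: cover T = cover (F :\: T).
Proof.
move=> TF; apply/setP => i.
by rewrite inE -!pblock_in_sub ?subsetDl // inE pblock_mem ?andbT // coverF inE.
Qed.

Variable k : nat.
Hypothesis uniF : forall A : {set 'I_n}, A \in F -> #|A| = k.

Lemma card_cover T : T \subset F -> #|cover T| = (#|T| * k)%N.
Proof.
move=> TF; rewrite -(eqP (trivIsetS TF trivF)) -sum_nat_const.
by apply: eq_bigr => A AT; rewrite uniF ?(subsetP TF).
Qed.

Lemma card_dual_code_blocks (C : {vspace 'rV[K]_n}) T : T \subset F ->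
  (#|[set u in dual_code C | blocks u \subset T]| * #|C|
    = #|K| ^ (#|T| * k) * #|[set c in code_set C | blocks c \subset F :\: T]|)%N.
Proof.
move=> TF; rewrite -card_cover //.
have -> : [set u in dual_code C | blocks u \subset T]
    = dual_code C :&: [set u | supp u \subset cover T].
  by apply/setP => u; rewrite !inE blocks_subset.
rewrite card_dual_code_supp; congr (_ * _)%N; apply: eq_card => c.
by rewrite !inE memv_cap mem_supported coverC // blocks_subset ?subsetDl.
Qed.

Lemma dual_moment (C : {vspace 'rV[K]_n}) m :
  ((\sum_(u in dual_code C) nsupsets #|F| (wtF F u) m) * #|C|
    = #|K| ^ (m * k) * \sum_(c in code_set C) 'C(#|F| - wtF F c, m))%N.
Proof.
(* Double count the pairs (T, u) with T an m-subset of F and [blocks u \subset T]. *)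
pose drawF T := (T \subset F) && (#|T| == m).
transitivity (\sum_(T | drawF T) #|[set u in dual_code C | blocks u \subset T]| * #|C|)%N.
  rewrite -big_distrl /= double_count; congr (_ * _)%N; apply: eq_bigr => u _.
  rewrite wtF_partition -card_supsets ?blocks_subF //.
  by apply: eq_card => T; rewrite !inE andbA.
under eq_bigr => T /andP[TF /eqP Tm] do rewrite card_dual_code_blocks // Tm.
rewrite -big_distrr /= double_count; congr (_ * _)%N; apply: eq_bigr => c _.
rewrite wtF_partition -(cardsDS (blocks_subF c)) -cards_draws.
by apply: eq_card => T; rewrite !inE !subsetD blocks_subF disjoint_sym andbAC.
Qed.

Lemma partition_MacWilliams : admits_MacWilliams K F.
Proof.
move=> C1 C2 /wenum_wt_count C12; apply: eq_wenum.
apply: (wt_count_moments (nsupsets_diag #|F|) (@nsupsets_small #|F|)) => m.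
have cardC (C : {vspace 'rV[K]_n}) : #|C| = (\sum_(c in code_set C) 1)%N.
  by rewrite sum1_card; apply: eq_card => c; rewrite inE.
have card12 : #|C1| = #|C2| by rewrite !cardC; apply: (eq_sum_by_wt (fun=> 1%N) C12).
have C2_gt0 : (0 < #|C2|)%N by apply/card_gt0P; exists 0; apply: mem0v.
apply/eqP; rewrite -(eqn_pmul2r C2_gt0) -{1}card12 !dual_moment.
by rewrite (eq_sum_by_wt (fun w => 'C(#|F| - w, m)) C12).
Qed.

End Partition.

Section Necessity.
Variables (K : finFieldType) (n : nat) (F : {set {set 'I_n}}).
Hypothesis covF : covering F.
Implicit Types (x y u : 'rV[K]_n).

Lemma wtF_scaleE (a : K) x : wtF F (a *: x) = if a == 0 then 0%N else wtF F x.
Proof.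
case: eqP => [->|/eqP a_nz]; last exact: wtF_scale.
by apply/eqP; rewrite scale0r wtF_eq0.
Qed.

Lemma wt_count_line x w : x != 0 ->
  wt_count F (code_set <[x]>) w = #|[set a : K | wtF F (a *: x) == w]|.
Proof.
move=> x_nz; have scale_inj : injective (fun a : K => a *: x).
  by move=> a b /eqP; rewrite -subr_eq0 -scalerBl scaler_eq0 (negbTE x_nz) orbF subr_eq0 => /eqP.
rewrite -(card_imset _ scale_inj); apply: eq_card => c; rewrite !inE.
apply/andP/imsetP => [[/vlineP[a ->] wa]|[a wa ->]]; first by exists a; rewrite ?inE.
by rewrite memvZ ?memv_line; move: wa; rewrite inE.
Qed.

Lemma wenum_line x y : x != 0 -> y != 0 -> wtF F x = wtF F y ->
  wenum F (code_set <[x]>) = wenum F (code_set <[y]>).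
Proof.
move=> x_nz y_nz xy; apply: eq_wenum => w; rewrite !wt_count_line //.
by apply: eq_card => a; rewrite !inE !wtF_scaleE xy.
Qed.

Lemma dual_code_line x : dual_code <[x]> = [set u | dot u x == 0].
Proof.
apply/setP => u; rewrite [in RHS]inE.
apply/dual_codeP/eqP => [-> //|ux c]; first exact: memv_line.
by case/vlineP=> a ->; rewrite dotZr ux mulr0.
Qed.

Definition orth_wt1 x := [set u | (dot u x == 0) && (wtF F u == 1%N)].

Lemma MacWilliams_orth_wt1 : admits_MacWilliams K F -> forall x y,
  x != 0 -> y != 0 -> wtF F x = wtF F y -> #|orth_wt1 x| = #|orth_wt1 y|.
Proof.
move=> macF x y x_nz y_nz xy; have := wenum_wt_count (macF _ _ (wenum_line x_nz y_nz xy)) 1.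
by rewrite /wt_count !dual_code_line; congr (_ = _); apply: eq_card => u; rewrite !inE.
Qed.

Lemma wtF_block x B i : B \in F -> i \in supp x -> supp x \subset B -> wtF F x = 1%N.
Proof.
move=> BF xi xB; apply/eqP; rewrite wtF_eq1 //; apply/andP; split.
  by apply/set0Pn; exists i.
by apply/exists_inP; exists B.
Qed.

Definition drop_coord i u : 'rV[K]_n := \row_l (if l == i then 0 else u 0 l).

Lemma supp_drop_coord i u : supp (drop_coord i u) = supp u :\ i.
Proof. by apply/setP => l; rewrite !inE mxE; case: (l == i); rewrite ?eqxx. Qed.

Definition chi (A : {set 'I_n}) : 'rV[K]_n := \row_l (l \in A)%:R.

Lemma supp_chi A : supp (chi A) = A.
Proof. by apply/setP => l; rewrite !inE mxE; case: (l \in A); rewrite ?oner_eq0 ?eqxx. Qed.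

Section Overlap.
Variables (i j : 'I_n).
Hypothesis ij : i != j.
Let Wi := orth_wt1 'e_i.
Let Wij := orth_wt1 ('e_i + 'e_j).

Lemma mem_orth_wt1_add u : (u \in Wij) = (u 0 i == - u 0 j) && (wtF F u == 1%N).
Proof. by rewrite inE dotDr !dot_delta addr_eq0. Qed.

Lemma drop_coord_inj : {in Wij &, injective (drop_coord i)}.
Proof.
move=> u v; rewrite !mem_orth_wt1_add => /andP[/eqP ui _] /andP[/eqP vi _] /rowP uv.
apply/rowP => l; have := uv l; have := uv j; rewrite !mxE eq_sym (negbTE ij) => uvj.
by case: (l =P i) => [->|//]; rewrite ui vi uvj.
Qed.

Lemma drop_coord_orth_wt1 u : u \in Wij -> drop_coord i u \in Wi.
Proof.
rewrite mem_orth_wt1_add inE dot_delta mxE eqxx /= eqxx /= !wtF_eq1 // supp_drop_coord.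
case/and3P=> /eqP ui u_nz /exists_inP[C CF uC]; apply/andP; split.
  apply: contra u_nz => /eqP ui0.
  have: j \notin supp u :\ i by rewrite ui0 inE.
  rewrite !inE eq_sym ij /= negbK => /eqP uj.
  apply/eqP/setP => l; rewrite !inE; case: (l =P i) => [->|/eqP li].
    by rewrite ui uj oppr0 eqxx.
  by have := in_set0 l; rewrite -ui0 !inE li.
by apply/exists_inP; exists C; rewrite // (subset_trans (subsetDl _ _) uC).
Qed.

Lemma orth_wt1_overlap_lt A : A \in F -> j \in A -> i \notin A ->
  (forall C : {set 'I_n}, C \in F -> ~~ (A \proper C)) -> (#|Wij| < #|Wi|)%N.
Proof.
(* [drop_coord i] embeds Wij into Wi, missing [chi A]: a preimage of [chi A] would be
   supported in a basic set containing both A and i. *)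
move=> AF jA iA maxA; rewrite -(card_in_imset drop_coord_inj); apply: proper_card.
apply/properP; split.
  by apply/subsetP => _ /imsetP[u uW ->]; apply: drop_coord_orth_wt1.
exists (chi A).
  rewrite inE dot_delta mxE (negbTE iA) eqxx wtF_eq1 // supp_chi /=.
  by apply/andP; split; [apply/set0Pn; exists j | apply/exists_inP; exists A].
apply/negP => /imsetP[u]; rewrite mem_orth_wt1_add wtF_eq1 //.
move=> /and3P[/eqP ui _ /exists_inP[C CF uC]] chiA.
have uj : u 0 j = 1.
  by have := congr1 (fun v : 'rV[K]_n => v 0 j) chiA; rewrite !mxE eq_sym (negbTE ij) jA.
have iC : i \in C by apply: (subsetP uC); rewrite inE ui uj oppr_eq0 oner_eq0.
move/negP: (maxA C CF); apply; apply/properP; split; last by exists i.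
by rewrite -(supp_chi A) chiA supp_drop_coord (subset_trans (subsetDl _ _) uC).
Qed.

End Overlap.

Lemma MacWilliams_trivIset : admits_MacWilliams K F ->
  (forall A B : {set 'I_n}, A \in F -> B \in F -> ~~ (A \proper B)) -> trivIset F.
Proof.
move=> macF maxF; apply/trivIsetP => A B AF BF AB; rewrite -setI_eq0.
apply/eqP/setP => j; rewrite !inE; apply/negbTE/negP => /andP[jA jB].
have /subsetPn[i iB iA] : ~~ (B \subset A).
  by apply: contra (maxF B A BF AF) => BA; rewrite properEneq eq_sym AB.
have ij : i != j by apply: contraNneq iA => ->.
have e_i : i \in supp ('e_i : 'rV[K]_n) by rewrite supp_delta set11.
have e_ij : i \in supp ('e_i + 'e_j : 'rV[K]_n).
  by rewrite supp_delta_add // setU11.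
have := orth_wt1_overlap_lt ij AF jA iA (fun C => maxF A C AF).
rewrite (MacWilliams_orth_wt1 macF (mem_supp_neq0 e_ij) (mem_supp_neq0 e_i)) ?ltnn //.
rewrite (wtF_block BF e_ij) ?(wtF_block BF e_i) // ?supp_delta ?sub1set //.
by rewrite supp_delta_add // subUset !sub1set iB.
Qed.

Lemma set0_notin_maximal (i : 'I_n) :
  (forall A B : {set 'I_n}, A \in F -> B \in F -> ~~ (A \proper B)) -> set0 \notin F.
Proof.
move=> maxF; apply/negP => F0; have /bigcupP[A AF iA] : i \in cover F by rewrite covF inE.
by move: (maxF _ _ F0 AF); rewrite proper0 => /negP; apply; apply/set0Pn; exists i.
Qed.

Section Blocks.
Hypothesis partF : partition F [set: 'I_n].

Lemma wt1_coord_nzE P i : P \in F -> i \in P ->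
  [set u : 'rV[K]_n | (u 0 i != 0) && (wtF F u == 1%N)]
    = [set u : 'rV[K]_n | supp u \subset P] :\: [set u : 'rV[K]_n | supp u \subset P :\ i].
Proof.
move=> PF iP; apply/setP => u; rewrite !inE wtF_eq1 // subsetD1 notin_supp.
have [ui|ui] := eqVneq (u 0 i) 0; rewrite ?andbT ?andNb ?andbF //=.
have i_u : i \in supp u by rewrite inE ui.
apply/andP/idP => [[_ /exists_inP[B BF uB]]|uP]; last first.
  by split; [apply/set0Pn; exists i | apply/exists_inP; exists P].
case/and3P: partF => _ trivF _.
by rewrite -(def_pblock trivF PF iP) (def_pblock trivF BF (subsetP uB i i_u)).
Qed.

Lemma card_orth_wt1_delta P i : P \in F -> i \in P ->
  (#|orth_wt1 'e_i| + (#|K| ^ #|P| - #|K| ^ #|P|.-1)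
    = #|[set u : 'rV[K]_n | wtF F u == 1%N]|)%N.
Proof.
move=> PF iP; rewrite -[RHS](cardsID [set u : 'rV[K]_n | u 0 i == 0]); congr (_ + _)%N.
  by apply: eq_card => u; rewrite !inE dot_delta andbC.
have -> : (#|K| ^ #|P| - #|K| ^ #|P|.-1)%N
    = #|[set u : 'rV[K]_n | (u 0 i != 0) && (wtF F u == 1%N)]|.
  rewrite (wt1_coord_nzE PF iP) cardsDS ?card_supp ?(cardsD1 i P) ?iP //.
  by apply/subsetP => u; rewrite !inE => /subset_trans; apply; apply: subD1set.
by apply: eq_card => u; rewrite !inE andbC.
Qed.

Lemma MacWilliams_uniform P Q : admits_MacWilliams K F -> P \in F -> Q \in F -> #|P| = #|Q|.
Proof.
move=> macF PF QF; case/and3P: partF => _ _ F0.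
have [i iP] : exists i, i \in P by apply/set0Pn; apply: contraNneq F0 => <-.
have [j jQ] : exists j, j \in Q by apply/set0Pn; apply: contraNneq F0 => <-.
have e_l l : l \in supp ('e_l : 'rV[K]_n) by rewrite supp_delta set11.
have wt_e B l : B \in F -> l \in B -> wtF F ('e_l : 'rV[K]_n) = 1%N.
  by move=> BF lB; rewrite (wtF_block BF (e_l l)) // supp_delta sub1set.
have /eqP := card_orth_wt1_delta PF iP.
rewrite -(card_orth_wt1_delta QF jQ).
rewrite (MacWilliams_orth_wt1 macF (mem_supp_neq0 (e_l i)) (mem_supp_neq0 (e_l j))); last first.
  by rewrite (wt_e P) ?(wt_e Q).
have P_gt0 : (0 < #|P|)%N by apply/card_gt0P; exists i.
have Q_gt0 : (0 < #|Q|)%N by apply/card_gt0P; exists j.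
rewrite eqn_add2l -(prednK P_gt0) -(prednK Q_gt0) /=.
by move/eqP/(expnS_subn_inj (finNzRing_gt1 K)) ->.
Qed.

End Blocks.

End Necessity.

Theorem theorem1 (K : finFieldType) (n : nat) (F : {set {set 'I_n}}) :
  (1 <= n)%N ->
  covering F ->
  (forall A : {set 'I_n}, ~ redundant F A) ->
  admits_MacWilliams K F <-> exists k : nat, k_partition F k.
Proof.
move=> n_gt0 covF nonred.
have maxF A B : A \in F -> B \in F -> ~~ (A \proper B).
  by move=> AF BF; apply/negP => AB; apply: (nonred A); split => //; exists B.
split=> [macF|[k [partF uniF]]]; last exact: (partition_MacWilliams (K := K) partF uniF).
pose i0 : 'I_n := Ordinal n_gt0.
have partF : partition F [set: 'I_n].
  rewrite /partition covF eqxx (MacWilliams_trivIset covF macF maxF).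
  exact: set0_notin_maximal covF i0 maxF.
have A0F : pblock F i0 \in F by rewrite pblock_mem // covF inE.
exists #|pblock F i0|; split=> // A AF; exact: (MacWilliams_uniform covF partF macF AF A0F).
Qed.
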